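(* Let $G$ be a finite, connected, simple, bridgeless, triangle-free cubic graph. Then the reduced order two line graph $\mathfrak{L}_2(G)$ is $4$-regular and connected.
   Context: For a simple graph $H$, the line graph $\mathcal{L}(H)$ has the edges of $H$ as vertices, two of them adjacent iff they share an endpoint. For every triangle $T$ (3-cycle) of $\mathcal{L}(G)$, its three edges are pairwise adjacent in $\mathcal{L}(\mathcal{L}(G))$ and form a triangle $\mathcal{L}(T)$ there; let $\mathcal{T}$ be the set of all triangles $\mathcal{L}(T)$, $T$ ranging over triangles of $\mathcal{L}(G)$. The reduced order two line graph $\mathfrak{L}_2(G)$ is the graph with the same vertex set as $\mathcal{L}(\mathcal{L}(G))$ and whose edges are the edges of $\mathcal{L}(\mathcal{L}(G))$ not belonging to any triangle in $\mathcal{T}$. *)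

From mathcomp Require Import all_boot.
Set Implicit Arguments. Unset Strict Implicit. Unset Printing Implicit Defensive.

Definition simple_graph (T : finType) (e : rel T) := symmetric e /\ irreflexive e.

Definition edges (T : finType) (e : rel T) : {set {set T}} :=
  [set A | [exists x, exists y, e x y && (A == [set x; y])]].

(* Line graph, as a relation on {set T}; its vertex set is [edges e]
   (all other elements of {set T} are isolated and are NOT vertices). *)
Definition lineG (T : finType) (e : rel T) : rel {set T} :=
  fun A B => [&& A \in edges e, B \in edges e, A != B & ~~ [disjoint A & B]].

Definition cubic (T : finType) (e : rel T) := forall x : T, #|[set y | e x y]| = 3.

Definition gconnected (T : finType) (e : rel T) := forall x y : T, connect e x y.

Definition triangle_free (T : finType) (e : rel T) :=
  forall x y z : T, ~~ [&& e x y, e y z & e z x].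

Definition edge_del (T : finType) (e : rel T) (x y : T) : rel T :=
  fun u v => e u v && ([set u; v] != [set x; y]).

Definition bridgeless (T : finType) (e : rel T) :=
  forall x y : T, e x y -> connect (edge_del e x y) x y.

(* Triangles of L(G): three distinct pairwise adjacent vertices A,B,C of L(G).
   L(T) is the triangle of L(L(G)) with vertices {A,B},{B,C},{A,C}. *)
Definition in_LT_triangle (T : finType) (e : rel T) (X Y : {set {set T}}) :=
  [exists A : {set T}, exists B : {set T}, exists C : {set T},
    [&& lineG e A B, lineG e B C, lineG e A C,
        X \in [:: [set A; B]; [set B; C]; [set A; C]] &
        Y \in [:: [set A; B]; [set B; C]; [set A; C]]]].

(* The reduced order two line graph, as a relation on {set {set T}};
   its vertex set is that of L(L(G)), namely [edges (lineG e)]. *)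
Definition redL2 (T : finType) (e : rel T) : rel {set {set T}} :=
  fun X Y => lineG (lineG e) X Y && ~~ in_LT_triangle e X Y.

Definition regular_on (U : finType) (V : {set U}) (r : rel U) (k : nat) :=
  forall X, X \in V -> #|[set Y | r X Y]| = k.

Definition connected_on (U : finType) (V : {set U}) (r : rel U) :=
  forall X Y, X \in V -> Y \in V -> connect r X Y.

(* A vertex of L(L(G)) is a pair {xy, yz} of edges of G meeting at y, i.e. a path x-y-z.
   Any triangle of L(G) consists of pairwise intersecting edges, so the edge between
   {xy, yz} and {yz, zw} survives in the reduced graph whenever xy and zw are disjoint,
   i.e. (G being triangle-free) whenever w <> y; it is deleted when the two vertices are
   {yx, yz} and {yx, yw}, three edges at y. Hence the neighbours of {yx, yz} are the
   paths x-y-z-w and w-x-y-z, two of each by cubicity: the degree is 4.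
   The vertices containing a fixed edge uv are the paths b-u-v and u-v-d, and each of
   the first kind is adjacent to each of the second, so they are all connected; moving
   along adjacent edges then reaches every vertex since G is connected. *)

From mathcomp Require Import all_boot.
Set Implicit Arguments. Unset Strict Implicit. Unset Printing Implicit Defensive.

Section Sets.
Variable U : finType.
Implicit Types (A B : {set U}) (x y z : U).

Lemma disjointNP A B : reflect (exists2 x, x \in A & x \in B) (~~ [disjoint A & B]).
Proof.
rewrite -setI_eq0; apply: (iffP (set0Pn _)) => [[x]|[x xA xB]].
  by rewrite inE => /andP[]; exists x.
by exists x; rewrite inE xA xB.
Qed.

Lemma set_neq_mem A B x : x \in A -> x \notin B -> A != B.
Proof. by move=> xA; apply: contraNneq => <-. Qed.

Lemma set2_injr x y z : y != x -> [set x; y] = [set x; z] -> y = z.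
Proof. by move=> yx /setP/(_ y); rewrite set22 => /esym/set2P[/eqP|]; rewrite ?(negPf yx). Qed.

Lemma connect_ind (r : rel U) (P : U -> Prop) x :
  P x -> (forall a b, P a -> r a b -> P b) -> forall y, connect r x y -> P y.
Proof.
move=> Px step _ /connectP[p + ->]; elim: p x Px => [|z p IHp] x //= Px.
by case/andP=> rxz; apply: IHp; apply: step rxz.
Qed.

End Sets.

Section Edges.
Variables (U : finType) (r : rel U).

Lemma edgesP A : reflect (exists x y, r x y /\ A = [set x; y]) (A \in edges r).
Proof.
rewrite inE; apply: (iffP existsP) => [[x /existsP[y /andP[rxy /eqP->]]]|[x [y [rxy ->]]]].
  by exists x, y.
by exists x; apply/existsP; exists y; rewrite rxy eqxx.
Qed.

Lemma edges_set2 x y : r x y -> [set x; y] \in edges r.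
Proof. by move=> rxy; apply/edgesP; exists x, y. Qed.

Lemma edges_at A v : symmetric r -> A \in edges r -> v \in A ->
  exists2 u, r v u & A = [set v; u].
Proof.
move=> rsym /edgesP[x [y [rxy ->]]] /set2P[]->; first by exists y.
by exists x; rewrite 1?rsym // setUC.
Qed.

End Edges.

Lemma lineG_sym (U : finType) (r : rel U) : symmetric (lineG r).
Proof. by move=> A B; rewrite /lineG eq_sym disjoint_sym; do 2!case: (_ \in edges r). Qed.

Section LineGraph.
Variables (U : finType) (r : rel U).

Lemma redL2_sym : symmetric (redL2 r).
Proof.
move=> X Y; rewrite /redL2 lineG_sym; congr (_ && ~~ _).
by apply/existsP/existsP=> -[A /existsP[B /existsP[C /and5P[? ? ? ? ?]]]];
  exists A; apply/existsP; exists B; apply/existsP; exists C; apply/and5P.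
Qed.

Lemma edges_lineG_has_edge X :
  X \in edges (lineG r) -> exists x y, r x y /\ [set x; y] \in X.
Proof.
case/edgesP=> A [B [/and4P[/edgesP[x [y [rxy ->]]] _ _ _] ->]].
by exists x, y; rewrite rxy set21.
Qed.

Lemma in_LT_triangle_meet X Y P Q :
  in_LT_triangle r X Y -> P \in X -> Q \in Y -> ~~ [disjoint P & Q].
Proof.
case/existsP=> A /existsP[B /existsP[C /and5P[AB BC AC XT YT]]] PX QY.
have inABC Z R : Z \in [:: [set A; B]; [set B; C]; [set A; C]] -> R \in Z ->
    R \in [:: A; B; C].
  by rewrite !inE => /or3P[]/eqP-> /set2P[]->; rewrite eqxx ?orbT.
have self D : D \in edges r -> ~~ [disjoint D & D].
  by case/edgesP=> x [y [_ ->]]; apply/disjointNP; exists x; rewrite set21.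
case/and4P: AB => AE BE _ mAB; case/and4P: BC => _ CE _ mBC; case/and4P: AC => _ _ _ mAC.
move: (inABC _ _ XT PX) (inABC _ _ YT QY); rewrite !inE.
by do 2!case/or3P=> /eqP->; rewrite ?self // disjoint_sym.
Qed.

End LineGraph.

Section CubicTriangleFree.
Variables (T : finType) (e : rel T).
Hypotheses (e_sym : symmetric e) (e_irr : irreflexive e).
Hypotheses (e_tfree : triangle_free e) (e_cubic : cubic e).

Local Notation V := (edges (lineG e)).

Lemma adj_neq x y : e x y -> x != y.
Proof. by apply: contraTneq => ->; rewrite e_irr. Qed.

Lemma card_nbrD1 x y : e x y -> #|[set z | e x z] :\ y| = 2.
Proof. by move=> exy; have := cardsD1 y [set z | e x z]; rewrite e_cubic inE exy add1n => -[]. Qed.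

Lemma other_nbr x y : e x y -> exists2 z, e x z & z != y.
Proof.
move=> /card_nbrD1 card2; have /card_gt0P[z] : 0 < #|[set z | e x z] :\ y| by rewrite card2.
by rewrite !inE => /andP[zy exz]; exists z.
Qed.

Lemma lineG_set2 x y z : e x y -> e x z -> y != z -> lineG e [set x; y] [set x; z].
Proof.
move=> exy exz yz; rewrite /lineG !edges_set2 //=.
have yNxz : y \notin [set x; z] by rewrite !inE negb_or yz andbT eq_sym adj_neq.
rewrite (set_neq_mem (set22 x y) yNxz) /=.
by apply/disjointNP; exists x; rewrite set21.
Qed.

Lemma lineG_set2_cases u v C : e u v -> lineG e [set u; v] C ->
  (exists c, [/\ e u c, c != v & C = [set u; c]]) \/
  (exists c, [/\ e v c, c != u & C = [set v; c]]).
Proof.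
move=> euv /and4P[_ CE AC /disjointNP[z zA zC]].
have [c ezc Cz] := edges_at e_sym CE zC.
case/set2P: zA => Ez; subst z; [left | right]; exists c; split=> //;
  by apply: contraNneq AC => Ec; rewrite Cz Ec // setUC.
Qed.

Lemma redL2_across_edge u v b d : e u v -> e u b -> b != v -> e v d -> d != u ->
  redL2 e [set [set u; v]; [set u; b]] [set [set u; v]; [set v; d]].
Proof.
move=> euv eub bv evd du.
have bd : b != d.
  by apply: contraNneq (e_tfree u b v) => Ebd; rewrite eub (e_sym b) Ebd evd (e_sym v) euv.
have uv := adj_neq euv.
have AP : lineG e [set u; v] [set u; b] by apply: lineG_set2; rewrite // eq_sym.
have AQ : lineG e [set v; u] [set v; d] by apply: lineG_set2; [rewrite e_sym | | rewrite eq_sym].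
have PQ : [set u; b] != [set v; d].
  by rewrite (set_neq_mem (x := u)) ?set21 // !inE negb_or uv eq_sym du.
rewrite setUC in AQ.
apply/andP; split.
  apply/and4P; split; try exact: edges_set2.
    rewrite (set_neq_mem (x := [set u; b])) ?set22 // !inE negb_or PQ andbT.
    by rewrite eq_sym; case/and4P: AP.
  by apply/disjointNP; exists [set u; v]; rewrite set21.
apply/negP => /in_LT_triangle_meet meet.
have /disjointNP[z /set2P[]-> /set2P[]/eqP] := meet _ _ (set22 _ [set u; b]) (set22 _ [set v; d]).
all: by rewrite ?(negPf uv) ?(negPf bv) ?(negPf bd) // eq_sym (negPf du).
Qed.

Definition two_paths x y : {set {set {set T}}} :=
  [set [set [set x; y]; [set y; c]] | c in [set z | e y z] :\ x].

Lemma card_two_paths x y : e x y -> #|two_paths x y| = 2.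
Proof.
move=> exy; rewrite card_in_imset ?card_nbrD1 1?e_sym // => c1 c2.
rewrite !inE => /andP[c1x eyc1] _ E.
have c1y : c1 != y by rewrite eq_sym adj_neq.
apply: (set2_injr c1y); apply: set2_injr E.
by rewrite (set_neq_mem (x := c1)) ?set22 // !inE negb_or c1x.
Qed.

Lemma two_paths_disjoint v u w : e v u -> e v w -> u != w ->
  [disjoint two_paths v u & two_paths v w].
Proof.
move=> evu evw uw; apply/pred0P => Y /=; apply/negP.
case/andP=> /imsetP[c1 _ ->] /imsetP[c2]; rewrite !inE => /andP[c2v ewc2].
move=> /setP/(_ [set v; u]); rewrite set21 => /esym/set2P[].
  have uv : u != v by rewrite eq_sym adj_neq.
  by move/(set2_injr uv)/eqP; rewrite (negPf uw).
move/setP/(_ v); rewrite set21 => /esym/set2P[] vE.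
  by move: evw; rewrite vE e_irr.
by move: c2v; rewrite vE eqxx.
Qed.

Lemma redL2_two_paths v u w Y : e v u -> e v w -> u != w ->
  Y \in two_paths v u -> redL2 e [set [set v; u]; [set v; w]] Y.
Proof.
move=> evu evw uw /imsetP[c]; rewrite !inE => /andP[cv euc] ->.
by apply: redL2_across_edge; rewrite // eq_sym.
Qed.

Lemma redL2_nbr_two_paths v u w Y : e v u -> e v w -> u != w ->
  redL2 e [set [set v; u]; [set v; w]] Y -> [set v; u] \in Y -> Y \in two_paths v u.
Proof.
move=> evu evw uw /andP[/and4P[_ YE XY _] notLT] AY.
have [C AC EY] := edges_at (@lineG_sym _ e) YE AY; subst Y.
have euv : e u v by rewrite e_sym.
have AC' : lineG e [set u; v] C by rewrite setUC.
case: (lineG_set2_cases euv AC') => [] [c [ec cv EC]]; subst C.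
  by apply/imsetP; exists c; rewrite // !inE cv ec.
have cw : c != w by apply: contraNneq XY => ->.
case/negP: notLT; apply/existsP; exists [set v; u].
apply/existsP; exists [set v; w]; apply/existsP; exists [set v; c].
have [wc uc] : w != c /\ u != c by rewrite !(eq_sym _ c).
by rewrite !lineG_set2 // !inE !eqxx ?orbT.
Qed.

Lemma redL2_nbrsE v u w : e v u -> e v w -> u != w ->
  [set Y | redL2 e [set [set v; u]; [set v; w]] Y] = two_paths v u :|: two_paths v w.
Proof.
move=> evu evw uw; have wu : w != u by rewrite eq_sym.
have XC : [set [set v; u]; [set v; w]] = [set [set v; w]; [set v; u]] by rewrite setUC.
apply/setP => Y; rewrite !inE; apply/idP/orP => [XY | []].
- case/andP: (XY) => /and4P[_ _ _ /disjointNP[A /set2P[]-> AY]] _.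
    by left; apply: redL2_nbr_two_paths XY AY.
  by right; rewrite XC in XY; apply: redL2_nbr_two_paths XY AY.
- exact: redL2_two_paths.
- by rewrite XC; apply: redL2_two_paths.
Qed.

Lemma redL2_regular X : X \in V -> #|[set Y | redL2 e X Y]| = 4.
Proof.
case/edgesP=> A [B [/and4P[AE BE AB /disjointNP[v vA vB]] ->]].
have [u evu Au] := edges_at e_sym AE vA; have [w evw Bw] := edges_at e_sym BE vB.
subst A B.
have uw : u != w by apply: contraNneq AB => ->.
rewrite redL2_nbrsE // cardsU disjoint_setI0 ?two_paths_disjoint //.
by rewrite cards0 subn0 !card_two_paths.
Qed.

Lemma connect_across_edge u v b C : e u v -> e u b -> b != v -> lineG e [set u; v] C ->
  connect (redL2 e) [set [set u; v]; [set u; b]] [set [set u; v]; C].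
Proof.
move=> euv eub bv AC.
case: (lineG_set2_cases euv AC) => [] [c [euc cv EC]]; subst C; last first.
  by apply: connect1; apply: redL2_across_edge.
have [d evd du] : exists2 d, e v d & d != u by apply: other_nbr; rewrite e_sym.
apply: (connect_trans (y := [set [set u; v]; [set v; d]])); apply: connect1.
  exact: redL2_across_edge.
by rewrite redL2_sym; apply: redL2_across_edge.
Qed.

Lemma connect_shared_edge X Y A : X \in V -> Y \in V -> A \in X -> A \in Y ->
  connect (redL2 e) X Y.
Proof.
move=> XE YE AX AY.
have [B AB EX] := edges_at (@lineG_sym _ e) XE AX.
have [C AC EY] := edges_at (@lineG_sym _ e) YE AY.
subst X Y; case/and4P: (AB) => /edgesP[x [y [exy EA]]] _ _ _; subst A.
case: (lineG_set2_cases exy AB) => [] [b [exb bx EB]]; subst B.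
  exact: connect_across_edge.
rewrite (setUC [set x] [set y]) in AC *.
by apply: connect_across_edge; rewrite // e_sym.
Qed.

Lemma lineG_edge_through x y : e x y -> exists2 W, W \in V & [set x; y] \in W.
Proof.
move=> exy; have [z exz zy] := other_nbr exy.
exists [set [set x; y]; [set x; z]]; last exact: set21.
by apply/edges_set2/lineG_set2; rewrite // eq_sym.
Qed.

Lemma connect_adjacent_edges z a b X Y : e z a -> e z b -> X \in V -> Y \in V ->
  [set z; a] \in X -> [set z; b] \in Y -> connect (redL2 e) X Y.
Proof.
move=> eza ezb XE YE AX BY.
case: (eqVneq a b) => [Eab | ab]; first by subst b; apply: connect_shared_edge AX BY.
have ZE : [set [set z; a]; [set z; b]] \in V by apply/edges_set2/lineG_set2.
apply: (connect_trans (y := [set [set z; a]; [set z; b]])).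
  exact: connect_shared_edge XE ZE AX (set21 _ _).
exact: connect_shared_edge ZE YE (set22 _ _) BY.
Qed.

Lemma connect_along_path X x0 x1 : X \in V -> e x0 x1 -> [set x0; x1] \in X ->
  forall z, connect e x0 z -> forall c Y, e z c -> Y \in V -> [set z; c] \in Y ->
  connect (redL2 e) X Y.
Proof.
move=> XE ex01 PX; apply: connect_ind.
  by move=> c Y ezc YE; apply: connect_adjacent_edges ex01 ezc XE YE PX.
move=> a b IHa eab c Y ebc YE BY.
have eba : e b a by rewrite e_sym.
have [W WE AW] := lineG_edge_through eba.
apply: connect_trans (connect_adjacent_edges eba ebc WE YE AW BY).
by apply: IHa eab WE _; rewrite setUC.
Qed.

End CubicTriangleFree.

Theorem proposition2p1 (T : finType) (e : rel T) :
  simple_graph e -> gconnected e -> bridgeless e -> triangle_free e -> cubic e ->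
  regular_on (edges (lineG e)) (redL2 e) 4 /\
  connected_on (edges (lineG e)) (redL2 e).
Proof.
move=> [e_sym e_irr] e_conn _ e_tfree e_cubic; split=> [X XE | X Y XE YE].
  exact: redL2_regular.
have [x0 [x1 [ex01 PX]]] := edges_lineG_has_edge XE.
have [y0 [y1 [ey01 QY]]] := edges_lineG_has_edge YE.
exact: connect_along_path XE ex01 PX _ (e_conn x0 y0) _ _ ey01 YE QY.
Qed.
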